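(* Let $R$ be a reduced ring and let $S=\left\{\begin{pmatrix} a&b\\0&a\end{pmatrix} : a,b\in R\right\}$. Then $S$ is almost Armendariz, and the trivial extension $T(S,S)$ is also almost Armendariz.
   Context: All rings are associative with identity. A ring is reduced if it has no nonzero nilpotent elements. For a ring $R$ and an $R$-bimodule $M$, the trivial extension $T(R,M)$ is $R\times M$ with componentwise addition and multiplication $(r_1,m_1)(r_2,m_2)=(r_1r_2, r_1m_2+m_1r_2)$. For a ring $R$, $P(R)$ denotes the prime radical of $R$ (the intersection of all prime ideals of $R$, equivalently the set of strongly nilpotent elements of $R$). A ring $R$ is called almost Armendariz if whenever $f(x)=\sum_{i=0}^m a_ix^i$ and $g(x)=\sum_{j=0}^n b_jx^j\in R[x]$ satisfy $f(x)g(x)=0$, then $a_ib_j\in P(R)$ for all $0\le i\le m$, $0\le j\le n$. *)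

From HB Require Import structures.
From mathcomp Require Import all_boot all_order all_algebra.
Set Implicit Arguments. Unset Strict Implicit. Unset Printing Implicit Defensive.
Import Order.TTheory GRing.Theory Num.Theory.
Local Open Scope ring_scope.

Definition reduced (R : nzRingType) : Prop :=
  forall (x : R) (n : nat), x ^+ n = 0 -> x = 0.

Definition is_ideal (R : nzRingType) (I : R -> Prop) : Prop :=
  [/\ I 0, (forall x y, I x -> I y -> I (x - y)) &
      (forall r x, I x -> I (r * x) /\ I (x * r))].

Definition is_prime_ideal (R : nzRingType) (P : R -> Prop) : Prop :=
  [/\ is_ideal P, ~ P 1 &
      (forall a b, (forall r, P (a * r * b)) -> P a \/ P b)].

Definition prime_radical (R : nzRingType) (x : R) : Prop :=
  forall P : R -> Prop, is_prime_ideal P -> P x.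

Definition almost_armendariz (R : nzRingType) : Prop :=
  forall f g : {poly R}, f * g = 0 ->
    forall i j, (i < size f)%N -> (j < size g)%N ->
      prime_radical (f`_i * g`_j).

Section UpperEq.
Variable R : nzRingType.

Definition upper_eq_pred : {pred 'M[R]_2} :=
  fun A => (A 1 0 == 0) && (A 0 0 == A 1 1).

Lemma upper_eq_subring_closed : subring_closed upper_eq_pred.
Proof.
split.
- by rewrite unfold_in /upper_eq_pred !mxE /= !eqxx.
- move=> A B; rewrite !unfold_in /upper_eq_pred => /andP[/eqP a10 /eqP a00]
    /andP[/eqP b10 /eqP b00].
  by rewrite !mxE a10 b10 a00 b00 subr0 !eqxx.
- move=> A B; rewrite !unfold_in /upper_eq_pred => /andP[/eqP a10 /eqP a00]
    /andP[/eqP b10 /eqP b00].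
  rewrite !mxE !big_ord_recr !big_ord0 /= !add0r.
  have e1 : forall H, widen_ord H (ord_max : 'I_1.+1) = (1 : 'I_2) by move=> H; apply/val_inj.
  have e0 : forall H, widen_ord H (ord0 : 'I_1.+1) = (0 : 'I_2) by move=> H; apply/val_inj.
  have e1' : (ord_max : 'I_2) = 1 by apply/val_inj.
  have e2 : forall H, widen_ord H (ord_max : 'I_0.+1) = (0 : 'I_2) by move=> H; apply/val_inj.
  rewrite ?e1 ?e0 ?e2 ?e1'.
  by rewrite a10 b10 a00 b00 !mul0r !mulr0 ?addr0 ?add0r !eqxx.
Qed.

HB.instance Definition _ := GRing.isSubringClosed.Build _ upper_eq_pred
  upper_eq_subring_closed.

Definition upper_eq_mx := {A : 'M[R]_2 | A \in upper_eq_pred}.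
HB.instance Definition _ := [isSub for (@sval _ _ : upper_eq_mx -> 'M[R]_2)].
HB.instance Definition _ := [Choice of upper_eq_mx by <:].
HB.instance Definition _ := [SubChoice_isSubNzRing of upper_eq_mx by <:].
End UpperEq.

Definition triv_ext (A : nzRingType) : Type := (A * A)%type.

Section TrivExt.
Variable A : nzRingType.
Local Notation T := (triv_ext A).

HB.instance Definition _ := GRing.Zmodule.on T.

Definition te_one : T := (1, 0).
Definition te_mul (x y : T) : T := (x.1 * y.1, x.1 * y.2 + x.2 * y.1).

Lemma te_mulA : associative te_mul.
Proof.
move=> [a b] [c d] [e f]; rewrite /te_mul /=; congr pair; first by rewrite mulrA.
by rewrite mulrDr mulrDl !mulrA addrA.
Qed.
Lemma te_mul1r : left_id te_one te_mul.
Proof. by move=> [a b]; rewrite /te_mul /te_one /= !mul1r mul0r addr0. Qed.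
Lemma te_mulr1 : right_id te_one te_mul.
Proof. by move=> [a b]; rewrite /te_mul /te_one /= !mulr1 mulr0 add0r. Qed.
Lemma te_mulDl : left_distributive te_mul +%R.
Proof.
move=> [a b] [c d] [e f]; rewrite /te_mul /=; congr pair; first by rewrite mulrDl.
by rewrite !mulrDl addrACA.
Qed.
Lemma te_mulDr : right_distributive te_mul +%R.
Proof.
move=> [a b] [c d] [e f]; rewrite /te_mul /=; congr pair; first by rewrite mulrDr.
by rewrite !mulrDr addrACA.
Qed.
Lemma te_one_neq0 : te_one != 0.
Proof. by apply/negP => /eqP[] /eqP; rewrite oner_eq0. Qed.

HB.instance Definition _ := GRing.Zmodule_isNzRing.Build T
  te_mulA te_mul1r te_mulr1 te_mulDl te_mulDr te_one_neq0.
End TrivExt.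

(* A reduced ring R is Armendariz: if f g = 0 in R[x], every product of a
   coefficient of f by a coefficient of g vanishes.  Hence any ring A with a
   ring morphism phi : A -> R whose kernel lies in the prime radical is almost
   Armendariz: f g = 0 gives phi (f_i g_j) = 0.  For S take phi = the common
   diagonal entry; its kernel consists of elements x with x S x = 0, which lie
   in every prime ideal.  For T(S,S) take phi composed with the first
   projection; if p is in that kernel then p r p lies in 0 x S, which squares
   to zero in the same sandwiched sense, so p is in the prime radical too. *)
From HB Require Import structures.
From mathcomp Require Import all_boot all_order all_algebra.
From mathcomp Require Import zify.
Import GRing.Theory.
Local Open Scope ring_scope.

Section ReducedArmendariz.
Variable R : nzRingType.
Hypothesis R_reduced : reduced R.

Lemma reduced_mul_eq0C {x y : R} : x * y = 0 -> y * x = 0.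
Proof.
by move=> xy0; apply: (R_reduced _ 2); rewrite expr2 mulrA -(mulrA y) xy0 mulr0 mul0r.
Qed.

(* Double induction: on the degree k, then on i.  Multiplying the k-th
   coefficient of f g on the right by f_i isolates f_i g_(k-i) f_i, since the
   other terms vanish by the two induction hypotheses. *)
Lemma reduced_coefM_eq0 {f g : {poly R}} :
  f * g = 0 -> forall k i, (i <= k)%N -> f`_i * g`_(k - i) = 0.
Proof.
move=> fg0; elim/ltn_ind => k IHk; elim/ltn_ind => t IHt tk.
have coefk : (\sum_(i < k.+1) f`_i * g`_(k - i)) * f`_t = 0.
  by rewrite -coefM fg0 coef0 mul0r.
rewrite mulr_suml (bigD1 (Ordinal (tk : (t < k.+1)%N))) //= big1 ?addr0 in coefk.
  by apply: (R_reduced _ 2); rewrite expr2 mulrA coefk mul0r.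
move=> [i ik] /= ne_it; have {ne_it} : i != t.
  by apply: contra ne_it => /eqP it; apply/eqP/val_inj.
rewrite neq_ltn => /orP[it | ti].
  by rewrite (IHt i it) ?mul0r //; lia.
have := IHk (t + (k - i))%N ltac:(lia) t (leq_addr _ _); rewrite addKn => ftg0.
by rewrite -mulrA (reduced_mul_eq0C ftg0) mulr0.
Qed.

Lemma reduced_armendariz (f g : {poly R}) :
  f * g = 0 -> forall i j, f`_i * g`_j = 0.
Proof.
by move=> fg0 i j; have := reduced_coefM_eq0 fg0 (i + j) i (leq_addr j i); rewrite addKn.
Qed.

End ReducedArmendariz.

Lemma prime_radical0 (A : nzRingType) : prime_radical (0 : A).
Proof. by move=> P [[]]. Qed.

Lemma prime_radical_sandwich (A : nzRingType) (x : A) :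
  (forall r, prime_radical (x * r * x)) -> prime_radical x.
Proof.
move=> xrx P Pprime; have [_ _ Pmul] := Pprime.
by case: (Pmul x x (fun r => xrx r P Pprime)).
Qed.

Lemma prime_radical_sandwich0 (A : nzRingType) (x : A) :
  (forall r, x * r * x = 0) -> prime_radical x.
Proof. by move=> xrx; apply: prime_radical_sandwich => r; rewrite xrx; apply: prime_radical0. Qed.

Lemma almost_armendariz_rmorphism {A R : nzRingType} (phi : {rmorphism A -> R}) :
  reduced R -> (forall x, phi x = 0 -> prime_radical x) -> almost_armendariz A.
Proof.
move=> R_reduced ker_rad f g fg0 i j _ _; apply: ker_rad.
rewrite rmorphM -!coef_map; apply: reduced_armendariz => //.
by rewrite -rmorphM fg0 rmorph0.
Qed.

Lemma mulmx2E (R : nzRingType) (M N : 'M[R]_2) i j :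
  (M *m N) i j = M i 0 * N 0 j + M i 1 * N 1 j.
Proof.
rewrite mxE !big_ord_recl big_ord0 addr0.
by have -> : lift ord0 ord0 = 1 :> 'I_2 by apply: val_inj.
Qed.

Lemma ord2P (i : 'I_2) : i = 0 \/ i = 1.
Proof. case: i => [[|[|n]] i_lt2] //; [left | right]; exact: val_inj. Qed.

Section UpperEqMx.
Variable R : nzRingType.
Local Notation S := (upper_eq_mx R).

Lemma upper_eq_mxE (x : S) : val x 1 0 = 0 /\ val x 1 1 = val x 0 0.
Proof. by have /andP[/eqP -> /eqP ->] := valP x. Qed.

Definition upper_eq_diag (x : S) : R := val x 0 0.

Lemma upper_eq_diag_is_zmod_morphism : zmod_morphism upper_eq_diag.
Proof. by move=> x y; rewrite /upper_eq_diag /= !mxE. Qed.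

Lemma upper_eq_diag_is_monoid_morphism : monoid_morphism upper_eq_diag.
Proof.
split=> [|x y]; first by rewrite /upper_eq_diag /= mxE.
by rewrite /upper_eq_diag /= mulmx2E (proj1 (upper_eq_mxE y)) mulr0 addr0.
Qed.

HB.instance Definition _ :=
  GRing.isZmodMorphism.Build S R upper_eq_diag upper_eq_diag_is_zmod_morphism.
HB.instance Definition _ :=
  GRing.isMonoidMorphism.Build S R upper_eq_diag upper_eq_diag_is_monoid_morphism.

Lemma upper_eq_diag_sandwich0 (x r : S) : upper_eq_diag x = 0 -> x * r * x = 0.
Proof.
rewrite /upper_eq_diag => x00; apply: val_inj; apply/matrixP => i j.
have [x10 x11] := upper_eq_mxE x; have [r10 r11] := upper_eq_mxE r.
rewrite /= !mulmx2E mxE.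
by case: (ord2P i) => ->; case: (ord2P j) => ->;
  rewrite ?x10 ?x11 ?x00 ?r10 ?r11 ?x00 !(mul0r, mulr0, addr0).
Qed.

End UpperEqMx.

Section TrivExtRadical.
Variable A : nzRingType.
Local Notation T := (triv_ext A).

Definition triv_ext_fst (p : T) : A := p.1.

Lemma triv_ext_fst_is_zmod_morphism : zmod_morphism triv_ext_fst.
Proof. by []. Qed.

Lemma triv_ext_fst_is_monoid_morphism : monoid_morphism triv_ext_fst.
Proof. by []. Qed.

HB.instance Definition _ :=
  GRing.isZmodMorphism.Build T A triv_ext_fst triv_ext_fst_is_zmod_morphism.
HB.instance Definition _ :=
  GRing.isMonoidMorphism.Build T A triv_ext_fst triv_ext_fst_is_monoid_morphism.

Lemma triv_ext_fst0_sandwich0 (y r : T) : y.1 = 0 -> y * r * y = 0.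
Proof.
case: y r => [y1 y2] [r1 r2] /= y10; rewrite y10.
by rewrite /GRing.mul /= /te_mul /= !(mul0r, mulr0, addr0).
Qed.

Lemma triv_ext_prime_radical (p : T) :
  (forall r, p.1 * r * p.1 = 0) -> prime_radical p.
Proof.
move=> p1rp1; apply: prime_radical_sandwich => r.
by apply: prime_radical_sandwich0 => r'; apply: triv_ext_fst0_sandwich0; apply: p1rp1.
Qed.

End TrivExtRadical.

Theorem corollary2p3 (R : nzRingType) :
  reduced R ->
  almost_armendariz (upper_eq_mx R) /\
  almost_armendariz (triv_ext (upper_eq_mx R)).
Proof.
move=> R_reduced; have diag_sandwich := @upper_eq_diag_sandwich0 R.
split.
- apply: (almost_armendariz_rmorphism (upper_eq_diag R)) => // x x0.
  by apply: prime_radical_sandwich0 => r; apply: diag_sandwich.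
- apply: (almost_armendariz_rmorphism
    (upper_eq_diag R \o triv_ext_fst (upper_eq_mx R) : {rmorphism _ -> _})) => // p p0.
  by apply: triv_ext_prime_radical => r; apply: diag_sandwich.
Qed.
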